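(* Let $q$ be a prime power, $m\geq1$, $n\geq2$, and let $r=(r_1,\ldots,r_n)\in\mathbb{F}_{q^m}^n$ with $\mathbb{F}_q(r_1,\ldots,r_n)=\mathbb{F}_{q^m}$. Let $m_i=[\mathbb{F}_q(r_i):\mathbb{F}_q]$ and suppose $m_1\geq m_2\geq\cdots\geq m_n$ with at least one strict inequality. Then there exists $f\in\mathbb{F}_q[X_1,\ldots,X_{n-1}]$ such that $[\mathbb{F}_q(r_n+f(r_1,\ldots,r_{n-1})):\mathbb{F}_q]>m_n$. *)

From HB Require Import structures.
From mathcomp Require Import all_boot all_order all_algebra all_field.
From mathcomp Require Import mpoly.
Set Implicit Arguments. Unset Strict Implicit. Unset Printing Implicit Defensive.
Import GRing.Theory.
Local Open Scope ring_scope.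

Definition elt_degree (F : fieldType) (L : fieldExtType F) (x : L) : nat :=
  \dim <<1; x>>%VS.

Definition mpoly_eval (F : fieldType) (L : fieldExtType F) (k : nat)
  (f : {mpoly F[k]}) (v : 'I_k -> L) : L :=
  mmap (in_alg L) v f.

From HB Require Import structures.
From mathcomp Require Import all_boot all_order all_algebra all_field.
From mathcomp Require Import mpoly.
Local Open Scope ring_scope.
Import GRing.Theory.

(* Let d = [F(r_n) : F] < [F(r_i) : F] for some i < n.  An element of degree
   k over F is fixed by x |-> x^(q^k), so all elements of degree at most d
   are roots of the product of the X^(q^k) - X for 1 <= k <= d; there are
   at most q + ... + q^d < q^(d+1) <= |F(r_i)| of them.  Hence among the
   translates r_n + y, y in F(r_i), one has degree > d, and y = p(r_i) for
   some univariate p over F. *)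

Lemma sum_expnS_lt (b d : nat) : (1 < b)%N -> (\sum_(k < d) b ^ k.+1 < b ^ d.+1)%N.
Proof.
move=> b_gt1; elim: d => [|d IHd]; first by rewrite big_ord0 expn_gt0 ltnW.
rewrite big_ord_recr /= [(b ^ d.+2)%N]expnS.
apply: leq_trans (_ : 2 * b ^ d.+1 <= b * b ^ d.+1)%N; last first.
  by rewrite leq_mul2r b_gt1 orbT.
by rewrite mul2n -addnn ltn_add2r.
Qed.

Lemma size_Xn_subX (R : nzRingType) (n : nat) :
  (1 < n)%N -> size ('X^n - 'X : {poly R}) = n.+1.
Proof. by move=> n_gt1; rewrite size_addl size_polyXn // size_opp size_polyX. Qed.

Lemma mpoly_eval_horner (F : fieldType) (L : fieldExtType F) (k : nat)
  (p : {poly F}) (i : 'I_k) (v : 'I_k -> L) :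
  mpoly_eval (map_poly (@mpolyC k F) p).['X_i] v = (map_poly (in_alg L) p).[v i].
Proof.
rewrite /mpoly_eval -horner_map /= -map_poly_comp mmapX mmap1U.
by congr (_.[_]); apply: eq_map_poly => c /=; rewrite mmapC.
Qed.

Section FiniteFieldExtension.

Variables (F : finFieldType) (L : fieldExtType F).
Local Notation q := #|F|.

Lemma elt_degree_gt0 (w : L) : (0 < elt_degree w)%N.
Proof. exact: (adim_gt0 <<1; w>>%AS). Qed.

Lemma expr_card_elt_degree (w : L) : w ^+ (q ^ elt_degree w) = w.
Proof. by apply/eqP; rewrite -Fermat's_little_theorem memv_adjoin. Qed.

Definition small_degree_poly (d : nat) : {poly L} :=
  \prod_(k < d) ('X^(q ^ k.+1) - 'X).

Lemma size_small_degree_factor (k : nat) :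
  size ('X^(q ^ k.+1) - 'X : {poly L}) = (q ^ k.+1).+1.
Proof.
by apply: size_Xn_subX; apply: leq_trans (ltn_expl k.+1 (finNzRing_gt1 F)).
Qed.

Lemma small_degree_poly_neq0 (d : nat) : small_degree_poly d != 0.
Proof.
rewrite prodf_seq_neq0; apply/allP => k _.
by rewrite -size_poly_gt0 size_small_degree_factor.
Qed.

Lemma size_small_degree_poly (d : nat) :
  size (small_degree_poly d) = (\sum_(k < d) q ^ k.+1).+1.
Proof.
rewrite size_prod => [|k _]; last by rewrite -size_poly_gt0 size_small_degree_factor.
rewrite (eq_bigr (fun k : 'I_d => q ^ k.+1 + 1)%N) => [|k _]; last first.
  by rewrite size_small_degree_factor addn1.
by rewrite big_split /= sum1_card -addSn addnK.
Qed.

Lemma root_small_degree_poly (d : nat) (w : L) :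
  (elt_degree w <= d)%N -> root (small_degree_poly d) w.
Proof.
move=> w_le_d; have w_gt0 := elt_degree_gt0 w.
have k_lt : ((elt_degree w).-1 < d)%N by rewrite prednK.
rewrite /small_degree_poly (bigD1 (Ordinal k_lt)) //=.
by rewrite rootM /root !hornerE prednK // expr_card_elt_degree subrr eqxx.
Qed.

Lemma size_uniq_elt_degree_le (d : nat) (s : seq L) : uniq s ->
  all (fun w => elt_degree w <= d)%N s -> (size s <= \sum_(k < d) q ^ k.+1)%N.
Proof.
move=> s_uniq s_small; rewrite -ltnS -size_small_degree_poly.
apply: max_poly_roots (small_degree_poly_neq0 d) _ s_uniq.
by apply/allP => w /(allP s_small); apply: root_small_degree_poly.
Qed.

Lemma exists_elt_degree_addr_gt (z : L) (V : {vspace L}) :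
  (elt_degree z < \dim V)%N ->
  exists2 y, y \in V & (elt_degree z < elt_degree (z + y))%N.
Proof.
move=> z_lt_V.
suff /existsP[y /andP[yV z_lt]] : [exists y : finvect_type L,
    (y \in V) && (elt_degree z < elt_degree (z + y))%N] by exists y.
apply: contraLR z_lt_V; rewrite negb_exists -leqNgt => /forallP z_max.
pose s := [seq z + (y : L) | y <- enum (V : {vspace finvect_type L})].
have s_uniq : uniq s by rewrite (map_inj_uniq (addrI z)); exact: enum_uniq.
have s_small : all (fun w => elt_degree w <= elt_degree z)%N s.
  apply/allP => _ /mapP[y yV ->]; rewrite leqNgt.
  by move: (z_max y); rewrite -mem_enum yV.
have := size_uniq_elt_degree_le _ _ s_uniq s_small.
have := card_vspace (V : {vspace finvect_type L}); rewrite cardE size_map => ->.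
rewrite leqNgt; apply: contraNT => z_lt_V.
apply: leq_trans (sum_expnS_lt _ (elt_degree z) (finNzRing_gt1 F)) _.
by rewrite leq_pexp2l ?(ltnW (finNzRing_gt1 F)) // ltnNge.
Qed.

End FiniteFieldExtension.

Theorem mainTheorem13 (F : finFieldType) (L : fieldExtType F) (n : nat)
  (hn : (2 <= n)%N) (r : 'I_n -> L)
  (hgen : <<1 & [seq r i | i : 'I_n]>>%VS = fullv)
  (hmono : forall i j : 'I_n, (i <= j)%N -> (elt_degree (r j) <= elt_degree (r i))%N)
  (hstrict : exists i j : 'I_n, val j = (val i).+1 /\ (elt_degree (r j) < elt_degree (r i))%N) :
  exists f : {mpoly F[n.-1]},
    forall j : 'I_n, val j = n.-1 ->
      (elt_degree (r j) <
       elt_degree (r j + mpoly_eval f (fun i : 'I_n.-1 => r (widen_ord (leq_pred n) i))))%N.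
Proof.
have [i0 [j0 [j0E lt_j0_i0]]] := hstrict.
have last_lt : (n.-1 < n)%N by rewrite prednK // ltnW.
pose jn := Ordinal last_lt.
have i0_lt : (i0 < n.-1)%N by rewrite -j0E -ltnS prednK ?ltn_ord // ltnW.
have jn_lt_i0 : (elt_degree (r jn) < elt_degree (r i0))%N.
  by apply: leq_ltn_trans lt_j0_i0; apply: hmono; rewrite /= -ltnS prednK ?ltn_ord // ltnW.
have [_ /Fadjoin1_polyP[p ->] jn_lt] :=
  @exists_elt_degree_addr_gt _ _ _ <<1; r i0>>%VS jn_lt_i0.
pose i : 'I_n.-1 := Ordinal i0_lt.
exists (map_poly (@mpolyC _ F) p).['X_i] => j jE.
have -> : j = jn by apply: val_inj.
rewrite mpoly_eval_horner.
by have -> : widen_ord (leq_pred n) i = i0 by apply: val_inj.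
Qed.
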